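(* Let $X$ be a finite $T_0$-space. If $\mathrm{tr}(X_M^2)=0$, then $X$ is a totally ordered set.
   Context: A finite $T_0$-space is identified with a finite poset via $x\le y$ iff $U_x\subseteq U_y$, where $U_x$ is the minimal open set containing $x$. For a labelling $X=\{x_1,\dots,x_n\}$, $X_M=(x_{i,j})$ is the $n\times n$ matrix with $x_{i,j}=0$ if $x_i\le x_j$ and $x_{i,j}=1$ otherwise. *)

From mathcomp Require Import all_boot all_order all_algebra.
Set Implicit Arguments. Unset Strict Implicit. Unset Printing Implicit Defensive.
Import GRing.Theory.

Definition is_finite_topology (T : finType) (opens : {set {set T}}) : Prop :=
  [/\ set0 \in opens, setT \in opens,
      (forall U V, U \in opens -> V \in opens -> U :|: V \in opens) &
      (forall U V, U \in opens -> V \in opens -> U :&: V \in opens)].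

Definition is_T0 (T : finType) (opens : {set {set T}}) : Prop :=
  forall x y : T, x != y -> exists2 U, U \in opens & (x \in U) != (y \in U).

Definition minopen (T : finType) (opens : {set {set T}}) (x : T) : {set T} :=
  \bigcap_(U in opens | x \in U) U.

Definition tle (T : finType) (opens : {set {set T}}) (x y : T) : bool :=
  minopen opens x \subset minopen opens y.

Definition XM (T : finType) (opens : {set {set T}}) (n : nat) (lab : 'I_n -> T)
  : 'M[int]_n :=
  \matrix_(i < n, j < n) (if tle opens (lab i) (lab j) then 0%R else 1%R).

From mathcomp Require Import all_boot all_order all_algebra.
Local Open Scope ring_scope.
Import Num.Theory.

(* Every diagonal entry of X_M^2 is a sum of products x_ij x_ji of 0/1 entries,
   so a zero trace forces each x_ij x_ji to vanish, i.e. every pair of points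
   to be comparable. *)

Lemma mxtrace_sqr_ge0_eq0 (R : numDomainType) (n : nat) (A : 'M[R]_n) :
  (forall i j, 0 <= A i j) -> \tr (A *m A) = 0 ->
  forall i j, A i j * A j i = 0.
Proof.
move=> A_ge0 trA0 i j.
have prod_ge0 k l : 0 <= A k l * A l k by rewrite mulr_ge0.
have diag_ge0 k : 0 <= (A *m A) k k.
  by rewrite mxE; apply: sumr_ge0 => l _.
have diag0 : (A *m A) i i = 0 by exact: (psumr_eq0P (fun k _ => diag_ge0 k) trA0).
rewrite mxE in diag0.
exact: (psumr_eq0P (fun l _ => prod_ge0 i l) diag0).
Qed.

Section IncomparabilityMatrix.

Variables (T : finType) (opens : {set {set T}}) (n : nat) (lab : 'I_n -> T).

Lemma XM_ge0 (i j : 'I_n) : 0 <= XM opens lab i j.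
Proof. by rewrite mxE; case: ifP. Qed.

Lemma XM_mul_eq0 (i j : 'I_n) :
  (XM opens lab i j * XM opens lab j i == 0) =
  tle opens (lab i) (lab j) || tle opens (lab j) (lab i).
Proof. by rewrite !mxE; case: tle; case: tle. Qed.

End IncomparabilityMatrix.

Theorem mainTheorem12 (T : finType) (opens : {set {set T}}) (n : nat)
  (lab : 'I_n -> T) :
  is_finite_topology opens -> is_T0 opens -> bijective lab ->
  \tr (XM opens lab *m XM opens lab) = 0 ->
  forall x y : T, tle opens x y || tle opens y x.
Proof.
move=> _ _ [lab_inv _ labK] trXM0 x y.
rewrite -(labK x) -(labK y) -XM_mul_eq0.
by apply/eqP; apply: mxtrace_sqr_ge0_eq0 trXM0 _ _ => i j; apply: XM_ge0.
Qed.
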